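(* Let $X$ be a continuum and $K\subset X$ a subcontinuum. Suppose the quotient $X/K$ is coastal at the point $K$. Then there exists $y\in X-K$ such that $\kappa(K;y)$ is dense in $X$.
   Context: A continuum is a nondegenerate compact connected Hausdorff space. $X/K$ is the quotient of $X$ obtained by collapsing $K$ to a single point, also denoted $K$. For a subcontinuum $L$ of a continuum $Z$ and a point $p$, $\kappa(L;p)$ is the union of all subcontinua $M$ of $Z$ with $L\subset M$, $M\neq Z$, $p\notin M$. $Z$ is coastal at $z$ if $\kappa(\{z\};p)$ is dense in $Z$ for some $p\neq z$. *)

From HB Require Import structures.
From mathcomp Require Import all_boot all_order all_algebra.
From mathcomp Require Import all_classical all_reals all_analysis.
Set Implicit Arguments. Unset Strict Implicit. Unset Printing Implicit Defensive.
Local Open Scope classical_set_scope.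

Definition is_continuum (T : topologicalType) (A : set T) : Prop :=
  [/\ compact A, connected A & exists a b, [/\ A a, A b & a <> b]].

Definition continuum_space (T : topologicalType) : Prop :=
  hausdorff_space T /\ is_continuum [set: T].

Definition kappa (T : topologicalType) (L : set T) (p : T) : set T :=
  \bigcup_(M in [set M : set T | [/\ is_continuum M, L `<=` M,
                                     M <> [set: T] & ~ M p]]) M.

Definition coastal_at (T : topologicalType) (z : T) : Prop :=
  exists p : T, p <> z /\ dense (kappa [set z] p).

(* q : X -> Z realizes Z as the quotient X/K obtained by collapsing K to a
   point: q is surjective, Z carries the quotient topology, and q identifies
   exactly the pairs of points of K. *)
Definition collapse_quotient (X Z : topologicalType) (K : set X) (q : X -> Z)
  : Prop :=
  [/\ forall z : Z, exists x, q x = z,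
      forall U : set Z, open U <-> open (q @^-1` U)
    & forall x y : X, q x = q y <-> (x = y \/ (K x /\ K y))].

From HB Require Import structures.
From mathcomp Require Import all_boot all_order all_algebra.
From mathcomp Require Import all_classical all_reals all_analysis.
Local Open Scope classical_set_scope.

(* Pick y with q y = p, where kappa({q k}; p) is dense in Z.  Since q is a closed map
   and X is normal, Z is Hausdorff, so every continuum M witnessing kappa({q k}; p) is
   closed and its preimage is compact.  That preimage is also connected: the fibres of q
   (points and K) are connected, so a relatively clopen part of it is saturated and
   maps to a clopen part of M.  Hence q^-1(M) witnesses kappa(K; y).  Finally, q is
   open on X - K, so preimages of dense sets containing the point K stay dense. *)

Definition saturated {X Z : Type} (q : X -> Z) (A : set X) : Prop :=
  q @^-1` (q @` A) `<=` A.

Lemma saturated_preimage_image {X Z : Type} {q : X -> Z} {A : set X} :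
  saturated q A -> q @^-1` (q @` A) = A.
Proof. by move=> satA; apply/seteqP; split=> [//|]; exact: preimage_image. Qed.

Lemma dense_subset {T : topologicalType} {A B : set T} :
  A `<=` B -> dense A -> dense B.
Proof.
move=> AB dA O O0 oO; have [x [Ox Ax]] := dA O O0 oO.
by exists x; split=> //; exact: AB.
Qed.

Lemma kappa_nonempty_sub {T : topologicalType} (L : set T) (p : T) :
  kappa L p !=set0 -> L `<=` kappa L p.
Proof.
by move=> [_ [M HM _]] x Lx; exists M => //; case: HM => _ LM _ _; exact: LM.
Qed.

Section quotient_map.
Context {X Z : topologicalType} {q : X -> Z}.
Hypothesis q_surj : forall z, exists x, q x = z.
Hypothesis q_open : forall U : set Z, open U <-> open (q @^-1` U).

Lemma quotient_closed (C : set Z) : closed C <-> closed (q @^-1` C).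
Proof. by rewrite -!openC q_open preimage_setC. Qed.

Lemma saturated_open_image (A : set X) :
  saturated q A -> open A -> open (q @` A).
Proof. by move=> satA oA; apply/q_open; rewrite saturated_preimage_image. Qed.

Lemma saturated_closed_image (A : set X) :
  saturated q A -> closed A -> closed (q @` A).
Proof. by move=> satA cA; apply/quotient_closed; rewrite saturated_preimage_image. Qed.

Section connected_fibers.
Hypothesis fiber_connected : forall z, connected (q @^-1` [set z]).

Lemma relative_clopen_saturated (M : set Z) (U C : set X) :
  open U -> closed C -> q @^-1` M `&` U = q @^-1` M `&` C ->
  saturated q (q @^-1` M `&` U).
Proof.
move=> oU cC UC x [a [Ma Ua] qax].
set F := q @^-1` [set q a].
have FM : F `<=` q @^-1` M by move=> u /= ->.
have FU : F `&` U = F.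
  apply: fiber_connected; first by exists a.
  - by exists U.
  - exists C => //.
    by rewrite -[in LHS](setIidl FM) -setIA UC setIA (setIidl FM).
have : F x by rewrite /F /= qax.
by rewrite -FU => -[_ Ux]; split=> //=; rewrite -qax.
Qed.

Lemma connected_preimage (M : set Z) :
  closed M -> connected M -> connected (q @^-1` M).
Proof.
move=> cM conM B B0 [U oU BU] [C cC BC].
set P := q @^-1` M in BU BC *; set B' := P `&` ~` U.
have cP : closed P by apply/quotient_closed.
have B'E : P `&` ~` C = B'.
  apply/seteqP; split=> x [Px nx]; split=> // y; apply: nx.
    have : B x by rewrite BU.
    by rewrite BC => -[].
  have : B x by rewrite BC.
  by rewrite BU => -[].
have satB : saturated q B.
  by rewrite BU; apply: relative_clopen_saturated oU cC _; rewrite -BU.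
have satB' : saturated q B'.
  rewrite -B'E; apply: relative_clopen_saturated B'E.
  - by rewrite openC.
  - by rewrite closedC.
have cqB : closed (q @` B).
  by apply: saturated_closed_image => //; rewrite BC; exact: closedI.
have cqB' : closed (q @` B').
  by apply: saturated_closed_image => //; apply: closedI => //; rewrite closedC.
have BM : q @` B `<=` M by move=> _ [x + <-]; rewrite BU => -[].
have qBM : q @` B = M.
  apply: conM; first by case: B0 => x Bx; exists (q x), x.
  - exists (~` (q @` B')); first by rewrite openC.
    apply/seteqP; split=> z.
      move=> [x Bx <-]; split; first by apply: BM; exists x.
      by move=> /satB' [_]; move: Bx; rewrite BU => -[].
    move=> [Mz nB'z]; have [x xz] := q_surj z; exists x => //.
    rewrite BU; split; first by rewrite /P /= xz.
    apply: contrapT => nUx; apply: nB'z.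
    by exists x => //; split=> //; rewrite /P /= xz.
  - by exists (q @` B) => //; apply/esym/setIidr.
by rewrite -(saturated_preimage_image satB) qBM.
Qed.

End connected_fibers.

Lemma closed_quotient_hausdorff :
  (forall C : set X, closed C -> closed (q @` C)) ->
  normal_space X -> accessible_space X -> hausdorff_space Z.
Proof.
move=> q_closed nX aX; rewrite open_hausdorff => z1 z2 /eqP z12.
have fiber_closed z : closed (q @^-1` [set z]).
  have [x <-] := q_surj z; apply/quotient_closed; rewrite -image_set1.
  exact/q_closed/accessible_closed_set1.
have : set_nbhs (q @^-1` [set z1]) (~` (q @^-1` [set z2])).
  apply/set_nbhsP; exists (~` (q @^-1` [set z2])); split=> //.
  - by rewrite openC.
  - by move=> x /= -> e.
case/(nX _ (fiber_closed z1)) => V /set_nbhsP [W [oW z1W WV]] clV.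
exists (~` (q @` ~` W), ~` (q @` closure V)); first split; rewrite ?inE /=.
- by move=> [x nWx qx]; apply/nWx/z1W.
- by move=> [x clVx qx]; apply: (clV x clVx).
split; rewrite ?openC; [exact/q_closed/open_closedC | exact/q_closed/closed_closure |].
apply/seteqP; split=> // z [nWz nVz]; have [x qx] := q_surj z; subst z.
have [Wx|nWx] := pselect (W x); last by apply: nWz; exists x.
by apply: nVz; exists x => //; apply/subset_closure/WV.
Qed.

End quotient_map.

Section collapse.
Context {X Z : topologicalType} {K : set X} {q : X -> Z}.
Hypothesis qK : collapse_quotient K q.

Let q_surj : forall z, exists x, q x = z. Proof. by case: qK. Qed.
Let q_open : forall U : set Z, open U <-> open (q @^-1` U). Proof. by case: qK. Qed.
Let q_eq : forall x y, q x = q y <-> (x = y \/ (K x /\ K y)). Proof. by case: qK. Qed.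

Lemma collapse_saturated_out (A : set X) : A `<=` ~` K -> saturated q A.
Proof. by move=> AK x [a Aa /q_eq [<-//|[Ka _]]]; case: (AK a Aa). Qed.

Lemma collapse_saturated_in (A : set X) : K `<=` A -> saturated q A.
Proof. by move=> KA x [a Aa /q_eq [<-//|[_ Kx]]]; exact: KA. Qed.

Lemma collapse_fiber_connected : connected K -> forall z, connected (q @^-1` [set z]).
Proof.
move=> conK z; have [x <-] := q_surj z.
have [Kx|nKx] := pselect (K x).
  suff -> : q @^-1` [set q x] = K by [].
  by apply/seteqP; split=> [u /q_eq [->//|[]//]|u Ku]; apply/q_eq; right.
suff -> : q @^-1` [set q x] = [set x] by exact: connected1.
by apply/seteqP; split=> [u /q_eq [->//|[]//]|u ->].
Qed.

Lemma collapse_closed_map : closed K -> forall C, closed C -> closed (q @` C).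
Proof.
move=> cK C cC; have [[k [Ck Kk]]|CK] := pselect (C `&` K !=set0).
  have -> : q @` C = q @` (C `|` K).
    rewrite image_setU; apply/esym/setUidl => _ [x Kx <-].
    by exists k => //; apply/q_eq; right.
  apply: (saturated_closed_image q_open); last exact: closedU.
  by apply: collapse_saturated_in; right.
apply: (saturated_closed_image q_open) => //; apply: collapse_saturated_out.
by move=> x Cx Kx; apply: CK; exists x.
Qed.

Lemma collapse_hausdorff :
  hausdorff_space X -> compact [set: X] -> closed K -> hausdorff_space Z.
Proof.
move=> hX cX cK; apply: closed_quotient_hausdorff q_surj q_open _ _ _.
- exact: collapse_closed_map.
- exact: compact_normal.
- exact: hausdorff_accessible.
Qed.

Lemma collapse_dense_preimage (D : set Z) (k : X) :
  closed K -> K k -> dense D -> D (q k) -> dense (q @^-1` D).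
Proof.
move=> cK Kk dD Dk W [w Ww] oW.
have [[x [Wx nKx]]|WK] := pselect (exists x, W x /\ ~ K x).
  have oqW : open (q @` (W `&` ~` K)).
    apply: (saturated_open_image q_open).
      by apply: collapse_saturated_out => ? [].
    by apply: openI => //; rewrite openC.
  have qW0 : q @` (W `&` ~` K) !=set0 by exists (q x), x.
  by have [_ [[x' [Wx' _] <-] Dx']] := dD _ qW0 oqW; exists x'.
have Kw : K w by apply: contrapT => nKw; apply: WK; exists w.
by exists w; split=> //=; have -> : q w = q k by apply/q_eq; right.
Qed.

Lemma collapse_preimage_continuum (M : set Z) :
  compact [set: X] -> hausdorff_space Z -> connected K ->
  is_continuum M -> is_continuum (q @^-1` M).
Proof.
move=> cX hZ conK [cM conM [a [b [Ma Mb ab]]]].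
have clM := compact_closed hZ cM.
have clP : closed (q @^-1` M) by apply/(quotient_closed q_open).
split.
- exact: subclosed_compact clP cX _.
- exact: (connected_preimage q_surj q_open (collapse_fiber_connected conK)).
- have [x xa] := q_surj a; have [y yb] := q_surj b.
  by exists x, y; split; rewrite /= ?xa ?yb // => xy; apply: ab; rewrite -xa -yb xy.
Qed.

Lemma collapse_preimage_kappa (k y : X) :
  compact [set: X] -> hausdorff_space Z -> connected K -> K k ->
  q @^-1` kappa [set q k] (q y) `<=` kappa K y.
Proof.
move=> cX hZ conK Kk x [M [contM kM _ My] Mx]; exists (q @^-1` M) => //; split.
- exact: collapse_preimage_continuum.
- move=> u Ku /=; have -> : q u = q k by apply/q_eq; right.
  exact: kM.
- by move=> MX; apply: My; have : (q @^-1` M) y by rewrite MX.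
- exact: My.
Qed.

End collapse.

Theorem mainTheorem14 (X : topologicalType) (K : set X)
  (Z : topologicalType) (q : X -> Z) (k : X) :
  continuum_space X -> is_continuum K ->
  collapse_quotient K q -> K k ->
  coastal_at (q k) ->
  exists y : X, ~ K y /\ dense (kappa K y).
Proof.
move=> [hX [cX _ _]] [cK conK _] qK Kk [p [pk dZ]].
have [q_surj _ q_eq] := qK.
have clK := compact_closed hX cK.
have hZ := collapse_hausdorff qK hX cX clK.
have [y qy] := q_surj p; subst p.
exists y; split=> [Ky|]; first by apply/pk/q_eq; right.
apply: dense_subset (collapse_preimage_kappa qK k y cX hZ conK Kk) _.
apply: (collapse_dense_preimage qK _ _ clK Kk dZ).
apply: kappa_nonempty_sub; last by [].
have [z [_ kz]] : [set: Z] `&` kappa [set q k] (q y) !=set0.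
  by apply: dZ; [exists (q k) | exact: openT].
by exists z.
Qed.
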